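(* Let $t(n)=\operatorname{num}_{\mathcal T}(n,1)$ for $n\ge1$ and $t(0)=1$. Then $t(3n)=t(3n+1)=t(3n+2)$ for all $n\ge0$, and $t(3n)-t(3n-2)=2^{2n}t(n)$ for all $n\ge1$.
   Context: A ternary partition of $n$ is a partition of $n$ (finite nonincreasing sequence of positive integers summing to $n$) all of whose parts are powers of $3$ (including $1$); $\mathcal T(n)$ is the set of ternary partitions of $n$, and $m_\lambda(i)$ the number of parts of $\lambda$ equal to $i$. For $\lambda\in\mathcal T(n)$ let $h_{\mathcal T,\lambda}(x)=\prod_{k\ge0}(1+x^{3^k})^{\lfloor n/3^k\rfloor-m_\lambda(3^k)}$. Let $G_{\mathcal T}(n,x)=\gcd\{h_{\mathcal T,\lambda}(x):\lambda\in\mathcal T(n)\}$ in $\mathbb{Z}[x]$ (normalized with positive leading coefficient), and $\operatorname{num}_{\mathcal T}(n,x)=\frac{1}{G_{\mathcal T}(n,x)}\sum_{\lambda\in\mathcal T(n)}h_{\mathcal T,\lambda}(x)\in\mathbb{Z}[x]$. *)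

From HB Require Import structures.
From mathcomp Require Import all_boot all_order all_algebra.
From Stdlib Require Import ClassicalEpsilon.
Set Implicit Arguments. Unset Strict Implicit. Unset Printing Implicit Defensive.
Import Order.TTheory GRing.Theory Num.Theory.

(* x is a power of 3 (3^k with k <= x suffices since 3^k > k) *)
Definition is_pow3 (x : nat) : bool := has (fun k => x == 3 ^ k) (iota 0 x.+1).

Definition is_tpart (n : nat) (l : seq nat) : bool :=
  [&& sorted geq l, all (fun x => 0 < x) l, all is_pow3 l & sumn l == n].

Fixpoint seqs_upto (k : nat) (vals : seq nat) : seq (seq nat) :=
  match k with
  | 0 => [:: [::]]
  | k'.+1 => [::] :: [seq x :: s | x <- vals, s <- seqs_upto k' vals]
  end.

(* T(n): the (duplicate-free) list of all ternary partitions of n.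
   Every partition of n has length <= n and parts in 1..n. *)
Definition tparts (n : nat) : seq (seq nat) :=
  undup [seq l <- seqs_upto n (iota 1 n) | is_tpart n l].

Local Open Scope ring_scope.

(* h_{T,lambda}(x) = prod_k (1 + x^(3^k))^(floor(n/3^k) - m_lambda(3^k));
   factors with 3^k > n have exponent 0, so k ranges over 0..n. *)
Definition hT (n : nat) (l : seq nat) : {poly int} :=
  \prod_(k < n.+1) (1 + 'X^(3 ^ k)) ^+ (n %/ 3 ^ k - count_mem (3 ^ k) l)%N.

Definition dvdZ (d p : {poly int}) : Prop := exists q : {poly int}, p = q * d.

Definition is_gcdZ (s : seq {poly int}) (g : {poly int}) : Prop :=
  (forall p, p \in s -> dvdZ g p) /\
  (forall d, (forall p, p \in s -> dvdZ d p) -> dvdZ d g) /\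
  0 < lead_coef g.

Definition GT (n : nat) : {poly int} :=
  epsilon (inhabits 0) (is_gcdZ [seq hT n l | l <- tparts n]).

Definition numT (n : nat) : {poly int} :=
  epsilon (inhabits 0) (fun q => q * GT n = \sum_(l <- tparts n) hT n l).

Definition t (n : nat) : int := if n == 0%N then 1 else (numT n).[1].

(* Every root z of the factors 1 + x^(3^k) satisfies z^(3^k) = -1 exactly for k
   beyond some threshold i, and h_lambda vanishes at z to the order
   sum_(k >= i) (floor(n/3^k) - m_lambda(3^k)).  As sum_(k >= i) m_lambda(3^k)
   <= floor(n/3^i), with equality for the greedy partition into parts 3^i and 1,
   the gcd is G_T(n,x) = prod_(k < n) (1 + x^(3^k))^floor(n/3^(k+1)); divisibility
   in Z[x] can be read off in C[x] because the divisors have unit leading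
   coefficients.  Evaluating at x = 1 then gives t(n) = sum_lambda 2^(n - length
   lambda).  Deleting the ones of a ternary partition of m and dividing its other
   parts by 3 leaves a ternary partition of some j <= m/3; hence
   t(m) = sum_(j <= m/3) 4^j t(j), which depends only on floor(m/3) and yields
   both identities. *)

From mathcomp Require Import all_boot all_order all_algebra all_field zify.
From Stdlib Require Import ClassicalEpsilon.
Import Order.TTheory GRing.Theory Num.Theory.

Set Implicit Arguments.
Unset Strict Implicit.
Unset Printing Implicit Defensive.

Lemma size_le_sumn l : all (fun x => 0 < x) l -> size l <= sumn l.
Proof. by elim: l => //= x l IH /andP[x_gt0 /IH]; lia. Qed.

Lemma sumn_map_muln a l : sumn (map (muln a) l) = a * sumn l.
Proof. by elim: l => [|x l /= ->]; rewrite ?muln0 ?mulnDr. Qed.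

Lemma leq_sumn_mem l x : x \in l -> x <= sumn l.
Proof. by elim: l => //= y l IH; rewrite in_cons => /orP[/eqP->|/IH]; lia. Qed.

Lemma mem_tparts n l : (l \in tparts n) = is_tpart n l.
Proof.
have seqs_upto_mem k vals s :
    size s <= k -> all (mem vals) s -> s \in seqs_upto k vals.
  elim: k s => [|k IH] [|x s] //=; rewrite ?in_cons ?eqxx // => Hs /andP[Hx Hl].
  by rewrite (allpairs_f (fun x s => x :: s) Hx (IH _ Hs Hl)) orbT.
rewrite mem_undup mem_filter; apply: andb_idr => /and4P[_ Hpos _ /eqP Hsum].
apply: seqs_upto_mem; first by rewrite -Hsum size_le_sumn.
apply/allP => x Hx; rewrite /= mem_iota -Hsum.
by have := allP Hpos x Hx; have := leq_sumn_mem Hx; lia.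
Qed.

Lemma is_pow3P x : reflect (exists k, x = 3 ^ k) (is_pow3 x).
Proof.
apply: (iffP hasP) => [[k _ /eqP ->]|[k ->]]; first by exists k.
by exists k => //; rewrite mem_iota ltnS; apply/ltnW/ltn_expl.
Qed.

Lemma tpart_size_le n l : is_tpart n l -> size l <= n.
Proof. by case/and4P=> _ Hpos _ /eqP <-; apply: size_le_sumn. Qed.

Lemma tpart_pow3 n l x : is_tpart n l -> x \in l -> exists2 k, k < n.+1 & x = 3 ^ k.
Proof.
case/and4P=> _ _ Hp3 /eqP Hsum Hx; have /is_pow3P[k Dx] := allP Hp3 x Hx.
exists k => //; rewrite ltnS -Hsum (leq_trans _ (leq_sumn_mem Hx)) // Dx.
exact/ltnW/ltn_expl.
Qed.

(** Every ternary partition of [m] is [3 * mu] followed by [m - 3 j] ones, for a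
    unique ternary partition [mu] of some [j <= m %/ 3]. *)
Definition untriple (l : seq nat) : seq nat := [seq x %/ 3 | x <- l & 1 < x].

Definition triple_pad (m j : nat) (l : seq nat) : seq nat :=
  map (muln 3) l ++ nseq (m - 3 * j) 1.

Lemma triple_padK m j l : all (fun x => 0 < x) l -> untriple (triple_pad m j l) = l.
Proof.
move=> Hpos; rewrite /untriple /triple_pad filter_cat filter_nseq cats0 /=.
have /all_filterP -> : all (fun x => 1 < x) (map (muln 3) l).
  by rewrite all_map; apply: sub_all Hpos => x /=; lia.
by rewrite -map_comp map_id_in // => x _; rewrite /= mulKn.
Qed.

Lemma sorted_geq_cat_ones s a :
  sorted geq s -> all (fun x => 0 < x) s -> sorted geq (s ++ nseq a 1).
Proof.
have path_ones y b : 0 < y -> path geq y (nseq b 1).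
  by elim: b y => //= b IH y Hy; rewrite IH // andbT.
case: s => [|x s]; first by case: a => //= a _ _; apply: path_ones.
move=> Hs Hpos; have last_gt0 := allP Hpos _ (mem_last x s).
by move: Hs; rewrite /= cat_path => ->; apply: path_ones.
Qed.

Lemma sorted_geq_ones l : sorted geq l -> all (fun x => 0 < x) l ->
  l = [seq x <- l | 1 < x] ++ nseq (count_mem 1 l) 1.
Proof.
elim: l => //= x s IH Hp /andP[x_gt0 Hpos]; have Hs := path_sorted Hp.
case: ltnP => [x_gt1|x_le1]; first by rewrite gtn_eqF // add0n {1}(IH Hs Hpos).
have -> : x = 1 by lia.
have s_ones : all (pred1 1) s.
  apply/allP => y Hy; have := allP (order_path_min (rev_trans leq_trans) Hp) y Hy.
  by have := allP Hpos y Hy; rewrite /=; lia.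
rewrite (eq_in_filter (a2 := pred0)) ?filter_pred0 => [|y /(allP s_ones)/eqP->//].
by rewrite eqxx add1n /= (all_pred1P _ _ s_ones) count_nseq /= mul1n.
Qed.

Lemma tpart_triple_pad m j l :
  j <= m %/ 3 -> is_tpart j l -> is_tpart m (triple_pad m j l).
Proof.
rewrite leq_divRL // => Hj /and4P[Hs Hpos Hp3 /eqP Hsum].
have Hpos3 : all (fun x => 0 < x) (map (muln 3) l).
  by rewrite all_map; apply: sub_all Hpos => x /=; lia.
apply/and4P; split.
- rewrite sorted_geq_cat_ones //.
  by apply: homo_sorted Hs => x y /=; rewrite leq_mul2l.
- by rewrite all_cat Hpos3 all_nseq orbT.
- rewrite all_cat all_nseq orbT andbT all_map.
  by apply: sub_all Hp3 => x /is_pow3P[k ->]; apply/is_pow3P; exists k.+1; rewrite expnS.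
- by rewrite sumn_cat sumn_map_muln sumn_nseq Hsum; apply/eqP; lia.
Qed.

Lemma tpart_untriple m l (mu := untriple l) : is_tpart m l ->
  [/\ sumn mu <= m %/ 3, is_tpart (sumn mu) mu & triple_pad m (sumn mu) mu = l].
Proof.
case/and4P=> Hs Hpos Hp3 /eqP Hsum.
have big3 x : x \in l -> 1 < x -> 3 * (x %/ 3) = x /\ is_pow3 (x %/ 3).
  move=> Hx; have /is_pow3P[[|k] ->] := allP Hp3 x Hx => // _.
  by rewrite expnS mulKn //; split => //; apply/is_pow3P; exists k.
have Dmu : map (muln 3) mu = [seq x <- l | 1 < x].
  rewrite -map_comp map_id_in // => x; rewrite mem_filter => /andP[x_gt1 Hx].
  by case: (big3 x Hx x_gt1).
have sum_mu : 3 * sumn mu + count_mem 1 l = m.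
  by rewrite -sumn_map_muln Dmu -Hsum {3}(sorted_geq_ones Hs Hpos) sumn_cat sumn_nseq mul1n.
split.
- by rewrite leq_divRL //; lia.
- apply/and4P; split => //.
  + by apply: homo_sorted (sorted_filter (rev_trans leq_trans) _ Hs) => x y; apply: leq_div2r.
  + rewrite all_map all_filter; apply/allP => x Hx /=; apply/implyP => x_gt1.
    by case: (big3 x Hx x_gt1); lia.
  + rewrite all_map all_filter; apply/allP => x Hx /=; apply/implyP => x_gt1.
    by case: (big3 x Hx x_gt1).
- by rewrite /triple_pad Dmu [RHS](sorted_geq_ones Hs Hpos); congr (_ ++ nseq _ _); lia.
Qed.

Lemma perm_tparts_block m j : j <= m %/ 3 ->
  perm_eq [seq l <- tparts m | sumn (untriple l) == j]
          [seq triple_pad m j mu | mu <- tparts j].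
Proof.
move=> Hj; apply: uniq_perm; first exact/filter_uniq/undup_uniq.
  rewrite map_inj_in_uniq ?undup_uniq // => mu1 mu2.
  rewrite !mem_tparts => /and4P[_ Hpos1 _ _] /and4P[_ Hpos2 _ _] E.
  by rewrite -(triple_padK m j Hpos1) E triple_padK.
move=> l; rewrite mem_filter mem_tparts.
apply/andP/mapP => [[/eqP <- /tpart_untriple[_ Hmu Dl]]|[mu Hmu ->]].
  by exists (untriple l); rewrite ?mem_tparts.
move: Hmu; rewrite mem_tparts => Hmu; case/and4P: (Hmu) => _ Hpos _ /eqP Hsum.
by rewrite triple_padK // Hsum tpart_triple_pad.
Qed.

Definition tweight (m : nat) : nat := \sum_(l <- tparts m) 2 ^ (m - size l).

Lemma tweight_rec m : tweight m = \sum_(j < (m %/ 3).+1) 4 ^ j * tweight j.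
Proof.
rewrite /tweight; transitivity (\sum_(l <- tparts m) \sum_(j < (m %/ 3).+1)
    (if sumn (untriple l) == j then 2 ^ (m - size l) else 0)).
  rewrite big_seq [RHS]big_seq; apply: eq_bigr => l.
  rewrite mem_tparts => /tpart_untriple[Hj _ _].
  rewrite (bigD1 (Ordinal (Hj : _ < (m %/ 3).+1))) //= eqxx big1 ?addn0 // => i.
  by rewrite -val_eqE /= eq_sym => /negbTE ->.
rewrite exchange_big; apply: eq_bigr => -[j /= Hj] _; rewrite ltnS in Hj.
rewrite -big_mkcond -big_filter (perm_big _ (perm_tparts_block Hj)) big_map big_distrr.
apply: eq_big_seq => mu; rewrite mem_tparts => /tpart_size_le Hmu.
rewrite size_cat size_map size_nseq.
have -> : m - (size mu + (m - 3 * j)) = 2 * j + (j - size mu).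
  by move: Hj Hmu; rewrite leq_divRL //; move: (size mu); lia.
by rewrite expnD expnM.
Qed.

Lemma tweight_mod3 n r : r < 3 -> tweight (3 * n + r) = tweight (3 * n).
Proof.
move=> r_lt3; rewrite (tweight_rec (3 * n + r)) (tweight_rec (3 * n)).
have -> : (3 * n + r) %/ 3 = n by lia.
by have -> : 3 * n %/ 3 = n by lia.
Qed.

Lemma tweight_diff n :
  0 < n -> tweight (3 * n) = tweight (3 * n - 2) + 4 ^ n * tweight n.
Proof.
move=> n_gt0; rewrite (tweight_rec (3 * n)) (tweight_rec (3 * n - 2)).
have -> : 3 * n %/ 3 = n by lia.
have -> : (3 * n - 2) %/ 3 = n.-1 by lia.
by rewrite big_ord_recr /= prednK.
Qed.

Lemma sum_count_pow3 N l (g : nat -> nat) :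
    (forall x, x \in l -> exists2 k, k < N & x = 3 ^ k) ->
  \sum_(k < N) count_mem (3 ^ k) l * g (3 ^ k) = \sum_(x <- l) g x.
Proof.
elim: l => [|x l IH] Hl; first by rewrite big_nil big1 // => k _; rewrite mul0n.
rewrite big_cons -IH => [|y Hy]; last by apply: Hl; rewrite in_cons Hy orbT.
have [j Hj ->] := Hl x (mem_head _ _).
under eq_bigr => k _ do rewrite /= eqn_exp2l // mulnDl.
rewrite big_split /= (bigD1 (Ordinal Hj)) //= eqxx mul1n big1 ?addn0 // => k.
by rewrite -val_eqE /= eq_sym => /negbTE ->.
Qed.

Lemma tpart_size n l : is_tpart n l -> \sum_(k < n.+1) count_mem (3 ^ k) l = size l.
Proof.
move=> Hl; rewrite -sum1_size -(@sum_count_pow3 n.+1 _ (fun _ => 1)) => [|x];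
  last exact: tpart_pow3.
by apply: eq_bigr => k _; rewrite muln1.
Qed.

Lemma tpart_sum n l : is_tpart n l -> \sum_(k < n.+1) count_mem (3 ^ k) l * 3 ^ k = n.
Proof.
move=> Hl; rewrite (@sum_count_pow3 n.+1 _ id) => [|x]; last exact: tpart_pow3.
by case/and4P: Hl => _ _ _ /eqP <-; rewrite sumnE.
Qed.

Lemma tpart_count_le n l k :
  is_tpart n l -> k < n.+1 -> count_mem (3 ^ k) l <= n %/ 3 ^ k.
Proof.
move=> Hl Hk; rewrite leq_divRL ?expn_gt0 // -[X in _ <= X](tpart_sum Hl).
by rewrite (bigD1 (Ordinal Hk)) //= leq_addr.
Qed.

Lemma tpart_count_tail n l i : is_tpart n l ->
  \sum_(k < n.+1) count_mem (3 ^ k) l * (i <= k) <= \sum_(k < n.+1) n %/ 3 ^ k * (i == k).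
Proof.
move=> Hl; have [Hi|Hi] := ltnP i n.+1; last first.
  by rewrite big1 // => k _; rewrite leqNgt (leq_trans (ltn_ord k) Hi) muln0.
rewrite [X in _ <= X](bigD1 (Ordinal Hi)) //= eqxx muln1.
rewrite [X in _ <= _ + X]big1 ?addn0 => [|k]; last first.
  by rewrite -val_eqE /= eq_sym => /negbTE ->; rewrite muln0.
rewrite leq_divRL ?expn_gt0 // -[X in _ <= X](tpart_sum Hl) big_distrl /=.
apply: leq_sum => k _; rewrite -mulnA leq_mul2l.
by case: (leqP i k) => Hik; rewrite ?mul0n ?mul1n ?leq_pexp2l ?orbT.
Qed.

Definition greedy_tpart n i : seq nat := nseq (n %/ 3 ^ i) (3 ^ i) ++ nseq (n %% 3 ^ i) 1.

Lemma tpart_greedy n i : is_tpart n (greedy_tpart n i).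
Proof.
apply/and4P; split.
- apply: sorted_geq_cat_ones; last by rewrite all_nseq expn_gt0 orbT.
  by elim: (n %/ 3 ^ i) => //= a; case: a => //= a ->; rewrite leqnn.
- by rewrite all_cat !all_nseq expn_gt0 !orbT.
- rewrite all_cat !all_nseq !orbT andbT; apply/orP; right; apply/is_pow3P; by exists i.
- by rewrite sumn_cat !sumn_nseq mul1n mulnC -divn_eq.
Qed.

Lemma count_greedy n i k : i <= k ->
  count_mem (3 ^ k) (greedy_tpart n i) = (k == i) * (n %/ 3 ^ i).
Proof.
move=> Hik; rewrite count_cat !count_nseq /=.
have -> : (3 ^ i == 3 ^ k) = (k == i) by rewrite eqn_exp2l // eq_sym.
have -> : (1 == 3 ^ k) = (k == 0) by rewrite -(expn0 3) eqn_exp2l // eq_sym.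
have [->|Hki] := eqVneq k i; last by rewrite (_ : (k == 0) = false) //; apply/negbTE; lia.
by case: eqP => [->|_]; rewrite ?expn0 ?modn1 /=; lia.
Qed.

(** The multiplicities of [hT n l] and [tgcd n] at a complex [z] such that
    [z ^+ 3 ^ k = -1] exactly for [k >= i]. *)
Definition hT_mult n i l : nat :=
  \sum_(k < n.+1) (n %/ 3 ^ k - count_mem (3 ^ k) l) * (i <= k).

Definition tgcd_mult n i : nat := \sum_(k < n) n %/ 3 ^ k.+1 * (i <= k).

Lemma tgcd_multE n i : tgcd_mult n i = \sum_(k < n.+1) n %/ 3 ^ k * (i < k).
Proof. by rewrite big_ord_recl /= muln0. Qed.

Lemma hT_mult_greedy n i : hT_mult n i (greedy_tpart n i) = tgcd_mult n i.
Proof.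
rewrite tgcd_multE; apply: eq_bigr => k _.
have [Hik|Hki] := leqP i k; last by rewrite ltnNge (ltnW Hki) !muln0.
rewrite count_greedy // ltn_neqAle Hik andbT eq_sym.
by have [->|_] := eqVneq i k; rewrite /= ?mul1n ?mul0n ?subnn ?subn0 ?muln1 ?muln0.
Qed.

Lemma tgcd_mult_le n i l : is_tpart n l -> tgcd_mult n i <= hT_mult n i l.
Proof.
move=> Hl; rewrite tgcd_multE.
have Hsub : hT_mult n i l + \sum_(k < n.+1) count_mem (3 ^ k) l * (i <= k)
          = \sum_(k < n.+1) n %/ 3 ^ k * (i <= k).
  rewrite -big_split; apply: eq_bigr => k _ /=.
  by rewrite -mulnDl subnK // tpart_count_le.
have Hsplit : \sum_(k < n.+1) n %/ 3 ^ k * (i <= k)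
    = \sum_(k < n.+1) n %/ 3 ^ k * (i < k) + \sum_(k < n.+1) n %/ 3 ^ k * (i == k).
  rewrite -big_split; apply: eq_bigr => k _ /=.
  by case: ltngtP => _; rewrite ?muln1 ?muln0 ?addn0.
have := tpart_count_tail i Hl; lia.
Qed.

Lemma upward_threshold (P : pred nat) N : (forall k, P k -> P k.+1) ->
  exists i, forall k, k < N -> P k = (i <= k).
Proof.
move=> PS; have P_up j k : j <= k -> P j -> P k.
  by move/subnK <-; elim: (k - j) => //= d IH /IH /PS.
have [/existsP[k0 Pk0]|noP] := boolP [exists k : 'I_N, P k]; last first.
  exists N => k ltkN; rewrite leqNgt ltkN; apply/negbTE.
  by move: noP; rewrite negb_exists => /forallP /(_ (Ordinal ltkN)).
have exP : exists k, P k by exists k0.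
case: (ex_minnP exP) => i Pi i_min; exists i => k _.
by apply/idP/idP => [/i_min //|le_ik]; apply: P_up le_ik Pi.
Qed.

Local Open Scope ring_scope.

Lemma monic_1addXn (R : nzSemiRingType) m : (0 < m)%N -> (1 + 'X^m : {poly R}) \is monic.
Proof. by move=> m_gt0; rewrite addrC -polyC1 monicXnaddC. Qed.

Section Multiplicity.
Variable F : fieldType.

Lemma mup_exp (z : F) p a : p != 0 -> mup z (p ^+ a) = (a * mup z p)%N.
Proof.
move=> p_neq0; elim: a => [|a IH]; first by rewrite expr0 mupNroot // root1.
by rewrite exprS mupM ?expf_neq0 // IH mulSn.
Qed.

Lemma mup_prod_exp (z : F) (I : Type) (r : seq I) (P : I -> {poly F}) (a : I -> nat) :
    (forall i, P i != 0) ->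
  mup z (\prod_(i <- r) P i ^+ a i) = (\sum_(i <- r) a i * mup z (P i))%N.
Proof.
move=> P_neq0; elim: r => [|i r IH]; first by rewrite !big_nil mupNroot // root1.
have prod_neq0 : \prod_(j <- r) P j ^+ a j != 0.
  by rewrite prodf_seq_neq0; elim: (r) => //= j s ->; rewrite andbT expf_neq0.
by rewrite !big_cons mupM ?expf_neq0 ?mup_exp ?IH.
Qed.

Lemma mup_le_dvdp (z : F) (p q : {poly F}) : q != 0 -> p %| q -> (mup z p <= mup z q)%N.
Proof.
move=> q_neq0 pq; have p_neq0 : p != 0.
  by apply: contraNneq q_neq0 => p0; rewrite -(dvd0p q) -p0.
by rewrite mup_geq //; apply: dvdp_trans pq; rewrite -mup_geq.
Qed.

(** [m%:R != 0] makes [1 + 'X^m] coprime to its derivative, so its roots are simple. *)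
Lemma mup_1addXn (z : F) m : (0 < m)%N -> m%:R != 0 :> F ->
  mup z (1 + 'X^m) = (z ^+ m == -1) :> nat.
Proof.
move=> m_gt0 m_neq0.
have root_z : root (1 + 'X^m) z = (z ^+ m == -1).
  by rewrite /root hornerD hornerXn hornerC addrC addr_eq0.
have [z_root|z_nroot] := boolP (z ^+ m == -1); last by rewrite mupNroot // root_z.
have p_neq0 : (1 + 'X^m : {poly F}) != 0 by apply/monic_neq0/monic_1addXn.
apply/eqP; rewrite eqn_leq mup_leq // mup_geq // expr1 dvdp_XsubCl root_z z_root andbT.
rewrite separable_nosquare // ?size_XsubC // unlock; apply/Bezout_coprimepP.
exists (1, - (m%:R^-1 *: 'X)); rewrite /= derivD derivC derivXn add0r mul1r.
rewrite mulNr -scalerAl mulrnAr -exprS prednK // -scaler_nat scalerA mulVf //.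
by rewrite scale1r addrK eqpxx.
Qed.

Lemma dvdp_prod_XsubC_mup (r : seq F) q : q != 0 ->
  (forall z, count_mem z r <= mup z q)%N -> \prod_(z <- r) ('X - z%:P) %| q.
Proof.
elim: r q => [|z r IH] q q_neq0 le_mup; first by rewrite big_nil dvd1p.
have : 'X - z%:P %| q by rewrite XsubC_dvd // (leq_trans _ (le_mup z)) //= eqxx.
rewrite dvdp_eq => /eqP Dq; rewrite big_cons [in X in _ %| X]Dq [X in _ %| X]mulrC.
rewrite dvdp_mul2l ?polyXsubC_eq0 //.
have q'_neq0 : q %/ ('X - z%:P) != 0 by apply: contraNneq q_neq0 => q'0; rewrite Dq q'0 mul0r.
apply: IH => // w; have := le_mup w; rewrite [in mup w q]Dq mupM ?polyXsubC_eq0 //.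
by rewrite -(expr1 ('X - z%:P)) mup_XsubCX /=; case: (z == w) => /=; lia.
Qed.

End Multiplicity.

Lemma dvdp_of_mup (F : closedFieldType) (p q : {poly F}) : p != 0 -> q != 0 ->
  (forall z, mup z p <= mup z q)%N -> p %| q.
Proof.
move=> p_neq0 q_neq0 le_mup; have [r Dp] := closed_field_poly_normal p.
rewrite Dp dvdpZl ?lead_coef_eq0 //; apply: dvdp_prod_XsubC_mup => // z.
rewrite -mu_prod_XsubC (leq_trans _ (le_mup z)) // [in mup z p]Dp -mul_polyC.
have prod_neq0 : \prod_(z <- r) ('X - z%:P) != 0 by apply/monic_neq0/monic_prod_XsubC.
by rewrite mupM ?polyC_eq0 ?lead_coef_eq0 // leq_addl.
Qed.

Lemma dvdp_map_ulc (R : idomainType) (F : fieldType) (f : {rmorphism R -> F})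
    (d p : {poly R}) : injective f -> lead_coef d \is a GRing.unit ->
  map_poly f d %| map_poly f p -> exists q, p = q * d.
Proof.
move=> inj_f ulc fd_p; have d_neq0 : d != 0.
  by apply: contraTneq ulc => ->; rewrite lead_coef0 unitr0.
have size_f := size_map_inj_poly inj_f (rmorph0 f).
have Dp := Pdiv.IdomainUnit.divp_eq ulc p.
exists (p %/ d); rewrite [LHS]Dp; suff -> : p %% d = 0 by rewrite addr0.
apply: (map_inj_poly inj_f (rmorph0 f)); rewrite rmorph0; apply/eqP.
apply: contraTT (Pdiv.Idomain.ltn_modpN0 p d_neq0) => r_neq0.
rewrite -leqNgt -size_f -(size_f (p %% d)) dvdp_leq //.
have fd_fqd : map_poly f d %| map_poly f (p %/ d) * map_poly f d := dvdp_mull _ (dvdpp _).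
by rewrite -(dvdp_addr _ fd_fqd) -rmorphM -rmorphD -Dp.
Qed.

Local Notation toC := (map_poly (intr : int -> algC)).

Lemma toC_neq0 (p : {poly int}) : p != 0 -> toC p != 0.
Proof.
by rewrite -!size_poly_eq0 size_map_inj_poly // ?mulr0z //; apply: intr_inj.
Qed.

Lemma dvdZ_mup (z : algC) (d p : {poly int}) :
  p != 0 -> dvdZ d p -> (mup z (toC d) <= mup z (toC p))%N.
Proof.
move=> p_neq0 [q Dp]; apply: mup_le_dvdp; first exact: toC_neq0.
by rewrite Dp rmorphM dvdp_mull.
Qed.

Lemma mup_dvdZ (d p : {poly int}) : lead_coef d \is a GRing.unit -> p != 0 ->
  (forall z : algC, mup z (toC d) <= mup z (toC p))%N -> dvdZ d p.
Proof.
move=> ulc p_neq0 le_mup; apply: (dvdp_map_ulc intr_inj ulc).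
have d_neq0 : d != 0 by apply: contraTneq ulc => ->; rewrite lead_coef0 unitr0.
by apply: dvdp_of_mup le_mup; apply: toC_neq0.
Qed.

Lemma monic_prod_1addXn (R : nzSemiRingType) (N : nat) (e : nat -> nat) :
  \prod_(k < N) (1 + 'X^(3 ^ k) : {poly R}) ^+ e k \is monic.
Proof.
by apply: monic_prod => k _; apply/monic_exp/monic_1addXn/expn_gt0.
Qed.

Lemma mup_prod_1addXn (z : algC) (N : nat) (e : nat -> nat) i :
    (forall k, (k < N)%N -> (z ^+ (3 ^ k) == -1) = (i <= k)%N) ->
  mup z (toC (\prod_(k < N) (1 + 'X^(3 ^ k)) ^+ e k)) = (\sum_(k < N) e k * (i <= k))%N.
Proof.
move=> thr; rewrite rmorph_prod /=.
under eq_bigr => k _ do rewrite rmorphXn rmorphD rmorph1 /= map_polyXn.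
rewrite mup_prod_exp => [|k]; last exact/monic_neq0/monic_1addXn/expn_gt0.
apply: eq_bigr => k _; rewrite mup_1addXn ?expn_gt0 ?pnatr_eq0 -?lt0n ?expn_gt0 //.
by rewrite thr.
Qed.

Lemma threshold_neg1 (z : algC) N : exists i, forall k, (k < N)%N ->
  (z ^+ (3 ^ k) == -1) = (i <= k)%N.
Proof.
apply: upward_threshold => k /eqP zk.
by rewrite expnSr exprM zk -signr_odd expr1.
Qed.

Definition tgcd n : {poly int} := \prod_(k < n) (1 + 'X^(3 ^ k)) ^+ (n %/ 3 ^ k.+1).

Lemma mup_hT (z : algC) n l i :
    (forall k, (k < n.+1)%N -> (z ^+ (3 ^ k) == -1) = (i <= k)%N) ->
  mup z (toC (hT n l)) = hT_mult n i l.
Proof. exact: (mup_prod_1addXn (fun k => n %/ 3 ^ k - count_mem (3 ^ k) l)%N). Qed.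

Lemma mup_tgcd (z : algC) n i :
    (forall k, (k < n.+1)%N -> (z ^+ (3 ^ k) == -1) = (i <= k)%N) ->
  mup z (toC (tgcd n)) = tgcd_mult n i.
Proof.
move=> thr; apply: (mup_prod_1addXn (fun k => n %/ 3 ^ k.+1)%N) => k ltkn.
exact/thr/ltnW.
Qed.

Lemma hT_greedy_in n i : hT n (greedy_tpart n i) \in [seq hT n l | l <- tparts n].
Proof. by apply: map_f; rewrite mem_tparts tpart_greedy. Qed.

Lemma is_gcdZ_tgcd n : is_gcdZ [seq hT n l | l <- tparts n] (tgcd n).
Proof.
have hT_monic l : hT n l \is monic.
  exact: (monic_prod_1addXn _ _ (fun k => n %/ 3 ^ k - count_mem (3 ^ k) l)%N).
have tgcd_monic : tgcd n \is monic.
  exact: (monic_prod_1addXn _ _ (fun k => n %/ 3 ^ k.+1)%N).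
split; [|split]; last by rewrite (eqP tgcd_monic) ltr01.
  move=> _ /mapP[l Hl ->]; rewrite mem_tparts in Hl.
  apply: mup_dvdZ; [by rewrite (eqP tgcd_monic) unitr1 | exact: monic_neq0 | move=> z].
  have [i thr] := threshold_neg1 z n.+1.
  by rewrite (mup_hT l thr) (mup_tgcd thr) tgcd_mult_le.
move=> d d_dvd; have [q Dh] := d_dvd _ (hT_greedy_in n 0).
have ulc : lead_coef d \is a GRing.unit.
  by apply/unitrPr; exists (lead_coef q); rewrite mulrC -lead_coefM -Dh; apply/eqP/hT_monic.
apply: mup_dvdZ ulc (monic_neq0 tgcd_monic) _ => z.
have [i thr] := threshold_neg1 z n.+1.
rewrite (mup_tgcd thr) -(hT_mult_greedy n i) -(mup_hT _ thr).
exact: dvdZ_mup (monic_neq0 (hT_monic _)) (d_dvd _ (hT_greedy_in n i)).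
Qed.

Lemma is_gcdZ_unique s g1 g2 : is_gcdZ s g1 -> is_gcdZ s g2 -> g1 = g2.
Proof.
case=> g1_dvd [g1_max g1_pos] [g2_dvd [g2_max g2_pos]].
have [q1 Dg1] := g1_max _ g2_dvd; have [q2 Dg2] := g2_max _ g1_dvd.
have g1_neq0 : g1 != 0 by apply: contraTneq g1_pos => ->; rewrite lead_coef0 ltxx.
have : q1 \is a GRing.unit.
  by apply/unitrPr; exists q2; apply: (mulIf g1_neq0); rewrite mul1r -mulrA -Dg2 -Dg1.
rewrite poly_unitE => /andP[/size_poly1P[c _ Dq1]]; rewrite Dq1 coefC /=.
rewrite qualifE /= => /orP[/eqP c1|/eqP cN1]; first by rewrite Dg1 Dq1 c1 mul1r.
move: g1_pos; rewrite Dg1 Dq1 cN1 lead_coefM lead_coefC mulN1r oppr_gt0.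
by rewrite ltNge ltW.
Qed.

Lemma GT_tgcd n : GT n = tgcd n.
Proof.
apply: is_gcdZ_unique (is_gcdZ_tgcd n); rewrite /GT; apply: epsilon_spec.
by exists (tgcd n); apply: is_gcdZ_tgcd.
Qed.

Lemma dvdZ_sum (g : {poly int}) (I : eqType) (r : seq I) (F : I -> {poly int}) :
  (forall i, i \in r -> dvdZ g (F i)) -> dvdZ g (\sum_(i <- r) F i).
Proof.
move=> dvd_r; rewrite big_seq; apply: big_ind => //; first by exists 0; rewrite mul0r.
by move=> _ _ [q1 ->] [q2 ->]; exists (q1 + q2); rewrite mulrDl.
Qed.

Lemma numT_mul_tgcd n : numT n * tgcd n = \sum_(l <- tparts n) hT n l.
Proof.
rewrite -GT_tgcd /numT; apply: (epsilon_spec (inhabits 0) (fun q => q * GT n = _)).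
have [q Dq] : dvdZ (GT n) (\sum_(l <- tparts n) hT n l).
  by apply: dvdZ_sum => l l_in; rewrite GT_tgcd; apply: (is_gcdZ_tgcd n).1; apply: map_f.
by exists q.
Qed.

Lemma horner1_prod_1addXn N (e : nat -> nat) :
  (\prod_(k < N) (1 + 'X^(3 ^ k) : {poly int}) ^+ e k).[1] = 2 ^+ (\sum_(k < N) e k)%N.
Proof.
rewrite horner_prod -prodrXr; apply: eq_bigr => k _.
by rewrite horner_exp hornerD hornerXn expr1n hornerC.
Qed.

Lemma hT_exponent n l : is_tpart n l ->
  (\sum_(k < n.+1) (n %/ 3 ^ k - count_mem (3 ^ k) l)
   = (n - size l) + \sum_(k < n) n %/ 3 ^ k.+1)%N.
Proof.
move=> Hl; have E : (\sum_(k < n.+1) (n %/ 3 ^ k - count_mem (3 ^ k) l)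
    + \sum_(k < n.+1) count_mem (3 ^ k) l = \sum_(k < n.+1) n %/ 3 ^ k)%N.
  by rewrite -big_split; apply: eq_bigr => k _ /=; rewrite subnK // tpart_count_le.
have E0 : (\sum_(k < n.+1) n %/ 3 ^ k = n + \sum_(k < n) n %/ 3 ^ k.+1)%N.
  by rewrite big_ord_recl /= expn0 divn1.
rewrite tpart_size // E0 in E.
by have := tpart_size_le Hl; lia.
Qed.

Lemma horner1_hT n l : is_tpart n l -> (hT n l).[1] = 2 ^+ (n - size l) * (tgcd n).[1].
Proof.
move=> Hl; rewrite /hT /tgcd.
rewrite (horner1_prod_1addXn _ (fun k => n %/ 3 ^ k - count_mem (3 ^ k) l)%N).
by rewrite (horner1_prod_1addXn _ (fun k => n %/ 3 ^ k.+1)%N) hT_exponent // exprD.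
Qed.

Lemma t_tweight n : t n = (tweight n)%:Z.
Proof.
case: n => [|n]; first by rewrite /t /tweight /tparts /= big_cons big_nil.
have tgcd1_neq0 : (tgcd n.+1).[1] != 0.
  by rewrite (horner1_prod_1addXn _ (fun k => n.+1 %/ 3 ^ k.+1)%N) expf_neq0.
rewrite /t /=; apply: (mulIf tgcd1_neq0); rewrite -hornerM numT_mul_tgcd horner_sum.
rewrite /tweight -natz natr_sum mulr_suml big_seq [RHS]big_seq; apply: eq_bigr => l.
by rewrite mem_tparts => Hl; rewrite horner1_hT // natrX.
Qed.

Theorem theorem5 :
  (forall n : nat, t (3 * n) = t (3 * n + 1) /\ t (3 * n + 1) = t (3 * n + 2)) /\
  (forall n : nat, (1 <= n)%N ->
     t (3 * n) - t (3 * n - 2) = 2 ^+ (2 * n) * t n).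
Proof.
split=> [n|n n_gt0]; rewrite !t_tweight; first by rewrite !tweight_mod3.
by rewrite tweight_diff // PoszD addrAC subrr add0r PoszM exprM -natz natrX.
Qed.
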